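(* Let $P$ be a profile of linear orders on a finite set $A$ which is single-crossing with respect to some tree on its voter set. Let $\mathcal{D}(P)$ be the set of distinct linear orders occurring in $P$. Then $\mathcal{D}(P)$ is a Condorcet domain.
   Context: A profile is a finite tuple of linear orders on $A$, one for each voter; voter $i$ prefers $a$ to $b$, written $a\succ_i b$. Given a tree $T=(V,E)$ whose vertex set $V$ is the set of voters, the profile is single-crossing with respect to $T$ if for every pair of distinct alternatives $a,b$ one of the following holds: (i) there is an edge $e\in E$ such that, removing $e$ from $T$, the two resulting subtrees have vertex sets $V_1,V_2$ with all voters in $V_1$ preferring $a$ to $b$ and all voters in $V_2$ preferring $b$ to $a$; or (ii) all voters prefer $a$ to $b$, or all voters prefer $b$ to $a$. The strict majority relation of a profile: $a\succ b$ iff strictly more voters prefer $a$ to $b$ than prefer $b$ to $a$. A set $C$ of linear orders on $A$ is a Condorcet domain if for every profile (with any finite number of voters) all of whose orders belong to $C$, the strict majority relation of that profile is transitive. *)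

From mathcomp Require Import all_boot.
Set Implicit Arguments.
Unset Strict Implicit.
Unset Printing Implicit Defensive.

(* A (strict) linear order on A, as a boolean relation: "r x y" = x is preferred to y. *)
Definition linear_order (A : finType) (r : rel A) : Prop :=
  [/\ irreflexive r, transitive r & forall x y, x != y -> r x y || r y x].

Definition simple_graph (V : finType) (e : rel V) : Prop :=
  symmetric e /\ irreflexive e.

Definition is_cycle (V : finType) (e : rel V) (x : V) (p : seq V) : Prop :=
  [/\ 2 <= size p, uniq (x :: p), path e x p & e (last x p) x].

Definition is_tree (V : finType) (e : rel V) : Prop :=
  [/\ simple_graph e,
      (forall x y, connect e x y) &
      (forall x p, ~ is_cycle e x p)].

Definition remove_edge (V : finType) (e : rel V) (u v : V) : rel V :=
  fun x y => e x y && ~~ (((x == u) && (y == v)) || ((x == v) && (y == u))).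

Definition side (V : finType) (e : rel V) (u v : V) : {set V} :=
  [set x | connect (remove_edge e u v) u x].

Definition single_crossing (A V : finType) (e : rel V) (P : V -> rel A) : Prop :=
  forall a b : A, a != b ->
    (exists u v, [/\ e u v,
                   (forall x, x \in side e u v -> P x a b) &
                   (forall x, x \in side e v u -> P x b a)])
    \/ (forall x, P x a b) \/ (forall x, P x b a).

Definition majority (A : finType) (n : nat) (Q : 'I_n -> rel A) : rel A :=
  fun a b => #|[set i | Q i b a]| < #|[set i | Q i a b]|.

Definition condorcet_domain (A : finType) (C : rel A -> Prop) : Prop :=
  forall (n : nat) (Q : 'I_n -> rel A),
    (forall i, C (Q i)) -> transitive (majority Q).

(* The set D(P) of orders occurring in P (equality of orders = extensional). *)
Definition orders_of (A V : finType) (P : V -> rel A) : rel A -> Prop :=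
  fun r => exists v : V, forall x y, P v x y = r x y.

(* For a pair of alternatives a, b the voters preferring a to b form a
   half-space of the tree: a set X left by exactly one edge uv, with X connected
   from u and its complement connected from v (or X is trivial).  For three
   half-spaces with X ∩ Y ⊆ Z one has X ⊆ Z, Y ⊆ Z or X ∩ Y = ∅: otherwise pick
   x ∈ X \ Z, y ∈ Y \ Z and m ∈ X ∩ Y; the path from x to y outside Z leaves X
   and Y, so the boundary edges of X and Y lie outside Z, while the paths inside
   X and Y from those edges to m ∈ Z enter Z, so the boundary edge of Z lies in
   X ∩ Y ⊆ Z, which is absurd.  Taking X, Y, Z the voters with a ≻ b, b ≻ c,
   a ≻ c, each of the three alternatives makes the majority relation transitive
   on a, b, c by comparing vote counts. *)
From mathcomp Require Import all_boot.
Set Implicit Arguments.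
Unset Strict Implicit.
Unset Printing Implicit Defensive.

Lemma linear_order_negb (A : finType) (r : rel A) x y :
  linear_order r -> x != y -> ~~ r x y = r y x.
Proof.
case=> irr tr tot nxy; apply/idP/idP; first by case/orP: (tot x y nxy) => ->.
by move=> ryx; apply/negP => /(tr _ _ _ ryx); rewrite irr.
Qed.

Section Within.

Variables (V : finType) (e : rel V).

Definition within (X : pred V) : rel V := [rel s t | [&& X s, X t & e s t]].

Lemma within_sym X : symmetric e -> symmetric (within X).
Proof. by move=> e_sym s t; rewrite /within /= e_sym; case: (X s); case: (X t). Qed.

Lemma connect_within (r : rel V) (X : pred V) s t :
  subrel r e -> subpred (connect r s) X -> connect r s t ->
  connect (within X) s t.
Proof.
move=> re rX /connectP[p pth ->].
have : all X (s :: p) by apply/allP => z /(path_connect pth)/rX.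
elim: p s pth {rX} => //= q p IHp s /andP[rsq pth] /andP[Xs Xqp].
apply: connect_trans (IHp q pth Xqp); apply: connect1.
by case/andP: Xqp => Xq _; rewrite /within /= Xs Xq re.
Qed.

End Within.

Section HalfSpace.

Variables (V : finType) (e : rel V).
Hypothesis e_sym : symmetric e.

Record half_space (X : pred V) (u v : V) : Prop := HalfSpace {
  half_space_in : X u;
  half_space_out : ~~ X v;
  half_space_cut : forall s t, e s t -> X s -> ~~ X t -> (s == u) && (t == v);
  half_space_connect_in : forall m, X m -> connect (within e X) u m;
  half_space_connect_out : forall m, ~~ X m -> connect (within e (predC X)) v m
}.

Lemma half_spaceC X u v : half_space X u v -> half_space (predC X) v u.
Proof.
case=> Xu Xv cut conn_in conn_out; split => //=; first by rewrite negbK.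
- by move=> s t est Xs /negbNE Xt; rewrite andbC cut // e_sym.
- move=> m /negbNE /conn_in; apply: connect_sub => s t st.
  by apply: connect1; rewrite /within /= !negbK.
Qed.

Lemma half_space_exit X W u v s t : half_space X u v ->
  connect (within e W) s t -> X s -> ~~ X t -> W u && W v.
Proof.
case=> _ _ cut _ _ /connectP[p + ->]; rewrite /within.
elim: p s => [|q p IHp] s /=; first by move=> _ ->.
case/andP=> /and3P[Ws Wq esq] pth Xs Xl.
have [Xq|Xq] := boolP (X q); first exact: IHp q pth Xq Xl.
by have /andP[/eqP<- /eqP<-] := cut _ _ esq Xs Xq; rewrite Ws Wq.
Qed.

Lemma half_space_cross X W u v s t : half_space X u v ->
  connect (within e W) s t -> X s != X t -> W u && W v.
Proof.
move=> hX st; case Xs: (X s); case Xt: (X t) => //= _.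
  by apply: half_space_exit hX st _ _; rewrite ?Xs ?Xt.
rewrite andbC; apply: half_space_exit (half_spaceC hX) st _ _.
  by rewrite /= Xs.
by rewrite /= Xt.
Qed.

Lemma half_space_trichotomy X Y Z u1 v1 u2 v2 u3 v3 :
  half_space X u1 v1 -> half_space Y u2 v2 -> half_space Z u3 v3 ->
  (forall m, X m -> Y m -> Z m) ->
  [\/ subpred X Z, subpred Y Z | forall m, X m -> ~~ Y m].
Proof.
move=> hX hY hZ XYZ.
have [/forallP XZ|/forallPn[x]] := boolP [forall m, X m ==> Z m].
  by constructor 1 => m; apply/implyP.
rewrite negb_imply => /andP[Xx Zx].
have [/forallP YZ|/forallPn[y]] := boolP [forall m, Y m ==> Z m].
  by constructor 2 => m; apply/implyP.
rewrite negb_imply => /andP[Yy Zy].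
have [/forallP nXY|/forallPn[m]] := boolP [forall m, X m ==> ~~ Y m].
  by constructor 3 => m; apply/implyP.
rewrite negb_imply negbK => /andP[Xm Ym]; exfalso.
have Yx : ~~ Y x by apply: contra Zx; apply: XYZ.
have Xy : ~~ X y by apply: contra Zy => Xy; apply: XYZ.
case: (hZ) => _ Zv3 _ _ /(_ _ Zx) v3x.
have xy : connect (within e (predC Z)) x y.
  rewrite (sym_connect_sym (within_sym _ e_sym)) in v3x.
  exact: connect_trans v3x (half_space_connect_out hZ Zy).
have /andP[Zu1 _] : ~~ Z u1 && ~~ Z v1.
  by apply: half_space_cross hX xy _; rewrite Xx (negbTE Xy).
have /andP[Zu2 _] : ~~ Z u2 && ~~ Z v2.
  by apply: half_space_cross hY xy _; rewrite (negbTE Yx) Yy.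
have Zm : Z m by exact: XYZ.
have /andP[_ Xv3] : X u3 && X v3.
  apply: half_space_cross hZ (half_space_connect_in hX Xm) _.
  by rewrite (negbTE Zu1) Zm.
have /andP[_ Yv3] : Y u3 && Y v3.
  apply: half_space_cross hZ (half_space_connect_in hY Ym) _.
  by rewrite (negbTE Zu2) Zm.
by move: Zv3; rewrite XYZ.
Qed.

Definition half_space_or_trivial (X : pred V) : Prop :=
  [\/ exists u v, half_space X u v, forall x, X x | forall x, ~~ X x].

Lemma half_space_or_trivial_trichotomy X Y Z :
  half_space_or_trivial X -> half_space_or_trivial Y -> half_space_or_trivial Z ->
  (forall m, X m -> Y m -> Z m) ->
  [\/ subpred X Z, subpred Y Z | forall m, X m -> ~~ Y m].
Proof.
move=> [[u1 [v1 hX]]|Xall|Xnone] hY hZ XYZ; first last.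
- by constructor 3 => m; rewrite (negbTE (Xnone m)).
- by constructor 2 => m; apply: XYZ.
case: hY => [[u2 [v2 hY]]|Yall|Ynone]; first last.
- by constructor 3 => m _; apply: Ynone.
- by constructor 1 => m Xm; apply: XYZ.
case: hZ => [[u3 [v3 hZ]]|Zall|Znone].
- exact: half_space_trichotomy hX hY hZ XYZ.
- by constructor 1.
- by constructor 3 => m Xm; apply: contra (Znone m); apply: XYZ.
Qed.

End HalfSpace.

Section EdgeSides.

Variables (V : finType) (e : rel V).
Hypotheses (e_sym : symmetric e) (e_conn : forall x y, connect e x y).

Lemma remove_edgeC u v : remove_edge e u v =2 remove_edge e v u.
Proof. by move=> x y; rewrite /remove_edge orbC. Qed.

Lemma side_cover u v x : (x \in side e u v) || (x \in side e v u).
Proof.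
rewrite !inE (eq_connect (remove_edgeC v u)).
set I := [pred z | connect (remove_edge e u v) u z
                   || connect (remove_edge e u v) v z].
have I_closed : closed e I.
  apply: (intro_closed (sym_connect_sym e_sym)) => z t ezt; rewrite !inE.
  case R: (remove_edge e u v z t).
    by case/orP=> Iz; apply/orP; [left|right];
      apply: connect_trans Iz (connect1 R).
  move: R; rewrite /remove_edge ezt => /negbFE /orP[] /andP[_ /eqP->] _;
    by rewrite connect0 ?orbT.
by have := closed_connect I_closed (e_conn u x); rewrite !inE connect0 => <-.
Qed.

Lemma side_half_space (X : pred V) u v :
  subpred (mem (side e u v)) X -> (forall x, x \in side e v u -> ~~ X x) ->
  half_space e X u v.
Proof.
move=> uvX vuX.
have Xside x : X x = (x \in side e u v).
  apply/idP/idP => [Xx|/uvX //]; case/orP: (side_cover u v x) => // /vuX.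
  by rewrite Xx.
have Xu : X u by rewrite Xside inE connect0.
have Xv : ~~ X v by apply: vuX; rewrite inE connect0.
split => //.
- move=> s t est; rewrite !Xside => Ss St.
  case R: (remove_edge e u v s t).
    by rewrite inE in Ss; rewrite inE (connect_trans Ss (connect1 R)) in St.
  move: R; rewrite /remove_edge est => /negbFE /orP[] // /andP[/eqP Es _].
  by move: Ss; rewrite Es -Xside (negbTE Xv).
- move=> m; rewrite Xside inE; apply: connect_within => [s t /andP[] //|z].
  by rewrite Xside inE.
- move=> m Xm; have : m \in side e v u.
    by case/orP: (side_cover u v m) => //; rewrite -Xside (negbTE Xm).
  rewrite inE; apply: connect_within => [s t /andP[] //|z uz].
  by apply: vuX; rewrite inE.
Qed.

End EdgeSides.

Lemma single_crossing_half_space_or_trivial (A V : finType) (e : rel V)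
    (P : V -> rel A) a b :
  symmetric e -> (forall x y, connect e x y) ->
  (forall v, linear_order (P v)) -> single_crossing e P -> a != b ->
  half_space_or_trivial e (fun x => P x a b).
Proof.
move=> e_sym e_conn lin sc nab.
have Pba x : P x b a = ~~ P x a b by rewrite linear_order_negb.
case: (sc a b nab) => [[u [v [_ uvab vuba]]]|[all_ab|all_ba]].
- constructor 1; exists u, v; apply: (side_half_space e_sym e_conn) => x.
  + exact: uvab.
  + by move/vuba; rewrite Pba.
- by constructor 2.
- by constructor 3 => x; rewrite -Pba.
Qed.

Section Majority.

Variables (A V : finType) (P : V -> rel A).
Hypothesis P_lin : forall v, linear_order (P v).

Lemma orders_of_card_le n (Q : 'I_n -> rel A) x y x' y' :
  (forall i, orders_of P (Q i)) -> (forall v, P v x y -> P v x' y') ->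
  #|[set i | Q i x y]| <= #|[set i | Q i x' y']|.
Proof.
move=> QP PP'; apply/subset_leq_card/subsetP => i; rewrite !inE.
by have [v Qv] := QP i; rewrite -!Qv; apply: PP'.
Qed.

Lemma condorcet_orders_of :
  (forall a b c, a != b -> b != c -> a != c ->
     [\/ forall v, P v a b -> P v a c,
         forall v, P v b c -> P v a c |
         forall v, P v a b -> ~~ P v b c]) ->
  condorcet_domain (orders_of P).
Proof.
move=> tri n Q QP b a c; rewrite /majority.
set N := fun x y => #|[set i | Q i x y]|; rewrite -!/(N _ _).
have N_le x y x' y' : (forall v, P v x y -> P v x' y') -> N x y <= N x' y'.
  exact: orders_of_card_le.
have Pneg v x y : x != y -> ~~ P v x y = P v y x.
  exact: linear_order_negb.
move=> ab bc.
have [eab | nab] := eqVneq a b; first by rewrite eab ltnn in ab.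
have [ebc | nbc] := eqVneq b c; first by rewrite ebc ltnn in bc.
have [eac | nac] := eqVneq a c.
  by rewrite eac in ab; have := ltn_trans ab bc; rewrite ltnn.
case: (tri a b c nab nbc nac) => H.
- have ca_ba : N c a <= N b a.
    apply: N_le => v; rewrite -(Pneg v a c) // -(Pneg v a b) //.
    exact: contra (H v).
  exact: leq_ltn_trans ca_ba (leq_trans ab (N_le _ _ _ _ H)).
- have ca_cb : N c a <= N c b.
    apply: N_le => v; rewrite -(Pneg v a c) // -(Pneg v b c) //.
    exact: contra (H v).
  exact: leq_ltn_trans ca_cb (leq_trans bc (N_le _ _ _ _ H)).
- have bc_ba : N b c <= N b a.
    by apply: N_le => v; rewrite -(Pneg v a b) //; apply: contraL (H v).
  have ab_cb : N a b <= N c b by apply: N_le => v /H; rewrite Pneg.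
  by have := leq_ltn_trans bc_ba (leq_trans ab ab_cb); rewrite ltnNge ltnW.
Qed.

End Majority.

Theorem theorem2 (A V : finType) (e : rel V) (P : V -> rel A) :
  is_tree e ->
  (forall v, linear_order (P v)) ->
  single_crossing e P ->
  condorcet_domain (orders_of P).
Proof.
move=> [[e_sym _] e_conn _] lin sc; apply: (condorcet_orders_of lin).
move=> a b c nab nbc nac.
have P_trans v : P v a b -> P v b c -> P v a c by case: (lin v) => _ + _; apply.
by apply: (half_space_or_trivial_trichotomy e_sym _ _ _ P_trans);
  apply: (single_crossing_half_space_or_trivial e_sym e_conn lin sc).
Qed.
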